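(* Let $H$, $L$ be as in the context with $L\mid Z$, let $k$ be an integer with $1\le k\le L-1$, and let $\mathcal T_0=\{x\in[MZ): x\equiv 0\pmod L\}$. Then $(1,\mathcal T_0)$ is a feasible solution with layer distance $d(1,\mathcal T_0)\ge k$ if and only if for every $j\in[NZ)$: (i) $\mathcal N(v_j)\cap\mathcal N(v_{\pi^t(j)})=\emptyset$ for all $t\in[1,k)$, and (ii) $\big|\{x\in\bigcup_{t\in[k)}\mathcal N(v_{\pi^t(j)}): x\equiv 0\pmod L\}\big|\le 1$.
   Context: Notation: $[a,b)=\{a,\dots,b-1\}$, $[n)=[0,n)$. Let $M,N,Z$ be positive integers and let $H$ be a binary $MZ\times NZ$ matrix made of $M\times N$ blocks, each a $Z\times Z$ circulant; assume $H$ has no zero row and no two identical rows. For $j\in[NZ)$, $\mathcal N(v_j)=\{i\in[MZ):H[i][j]=1\}$. For an index $i$ (a row index in $[MZ)$ or a column index in $[NZ)$) and an integer $s$, $\pi^s(i)=Z\lfloor i/Z\rfloor+((i+s)\bmod Z)$; for a set $\mathcal T$ of row indices, $\pi^s(\mathcal T)=\{\pi^s(x):x\in\mathcal T\}$. For $\mathcal A\subseteq[MZ)$, $H_{\mathcal A}$ is the submatrix of rows indexed by $\mathcal A$; $\omega(A)$ is the maximum Hamming weight of a column of $A$ ($\omega$ of the empty matrix is $0$). Fix an integer $L>1$. A pair $(S,\mathcal T_0)$ ($S$ a positive integer, $\mathcal T_0\subseteq[MZ)$) is a feasible solution if, with $\mathcal T_l=\pi^{lS}(\mathcal T_0)$ for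 $l\in[L)$, the sets $\mathcal T_0,\dots,\mathcal T_{L-1}$ are pairwise disjoint with union $[MZ)$. The layer distance $d(S,\mathcal T_0)$ is the largest $l\in[L)$ such that the vertical stack of $H_{\mathcal T_0},\dots,H_{\mathcal T_{l-1}}$ has maximum column weight at most $1$. *)

From mathcomp Require Import all_boot all_order all_algebra.
Set Implicit Arguments. Unset Strict Implicit. Unset Printing Implicit Defensive.

Definition piZ (Z s i : nat) : nat := Z * (i %/ Z) + (i + s) %% Z.

(* pi^s as a map on indices in [K*Z) (K = M for rows, N for columns).
   piZ always stays in [K*Z), so the default of insubd is never used. *)
Definition piO (K Z : nat) (s : nat) (i : 'I_(K * Z)) : 'I_(K * Z) :=
  insubd i (piZ Z s i).

Definition pi_set (M Z s : nat) (T : {set 'I_(M * Z)}) : {set 'I_(M * Z)} :=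
  [set piO s x | x in T].

(* H is made of M x N blocks, each a Z x Z circulant:
   within a block, the entry only depends on (column - row) mod Z. *)
Definition circulant_blocks (M N Z : nat) (H : 'M[bool]_(M * Z, N * Z)) : Prop :=
  forall (i i' : 'I_(M * Z)) (j j' : 'I_(N * Z)),
    i %/ Z = i' %/ Z -> j %/ Z = j' %/ Z ->
    (j %% Z + Z - i %% Z) %% Z = (j' %% Z + Z - i' %% Z) %% Z ->
    H i j = H i' j'.

Definition no_zero_row (M N Z : nat) (H : 'M[bool]_(M * Z, N * Z)) : Prop :=
  forall i : 'I_(M * Z), exists j : 'I_(N * Z), H i j.

Definition distinct_rows (M N Z : nat) (H : 'M[bool]_(M * Z, N * Z)) : Prop :=
  forall i i' : 'I_(M * Z), (forall j, H i j = H i' j) -> i = i'.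

Definition Nv (M N Z : nat) (H : 'M[bool]_(M * Z, N * Z)) (j : 'I_(N * Z))
  : {set 'I_(M * Z)} := [set i | H i j].

Definition layer (M Z S : nat) (T0 : {set 'I_(M * Z)}) (l : nat) :=
  pi_set (l * S) T0.

Definition feasible (M Z L S : nat) (T0 : {set 'I_(M * Z)}) : Prop :=
  0 < S /\
  (forall l1 l2, l1 < L -> l2 < L -> l1 != l2 ->
     [disjoint layer S T0 l1 & layer S T0 l2]) /\
  \bigcup_(l < L) layer S T0 l = [set: 'I_(M * Z)].

(* Weight of column j of the vertical stack of H_{T_0},...,H_{T_{l-1}} *)
Definition stack_col_weight (M N Z S : nat) (H : 'M[bool]_(M * Z, N * Z))
  (T0 : {set 'I_(M * Z)}) (l : nat) (j : 'I_(N * Z)) : nat :=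
  \sum_(m < l) #|[set i in layer S T0 m | H i j]|.

Definition stack_ok (M N Z S : nat) (H : 'M[bool]_(M * Z, N * Z))
  (T0 : {set 'I_(M * Z)}) (l : nat) : bool :=
  [forall j : 'I_(N * Z), stack_col_weight S H T0 l j <= 1].

(* d(S, T_0): largest l in [L) with stack_ok l (l = 0 always qualifies) *)
Definition layer_distance (M N Z L S : nat) (H : 'M[bool]_(M * Z, N * Z))
  (T0 : {set 'I_(M * Z)}) : nat :=
  \max_(l < L | stack_ok S H T0 l) (l : nat).

(** Since [L] divides [Z], the cyclic shift [pi^s] adds [s] to residues modulo
    [L], so the layer [T_l] is the residue class [l] and the first [k] layers
    stack to the rows of residue below [k].  Hence [d(1, T_0) >= k] says that
    every column meets at most one row of residue [< k].  As [H] commutes with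
    simultaneous shifts of rows and columns, this is the same as asking, for
    every column [j] and shift [s], that at most one row of [N(v_j)] has
    [(i + s) mod L < k].  Condition (i) expresses that the [k] translates
    [pi^t(N(v_j))], [t < k], are pairwise disjoint, and condition (ii) that at
    most one of their points is [0 mod L]; a point [pi^t i] is [0 mod L]
    exactly when [(i + k - 1) mod L = k - 1 - t], which links the two sides. *)

From mathcomp Require Import all_boot all_order all_algebra.
From mathcomp Require Import zify.

Section CyclicShift.
Context {K Z : nat}.
Hypothesis Z_gt0 : 0 < Z.
Implicit Types (i : 'I_(K * Z)) (s : nat).

Lemma piZ_lt s (i : nat) : i < K * Z -> piZ Z s i < K * Z.
Proof.
move=> lt_iKZ; have lt_iZ_K : i %/ Z < K by rewrite ltn_divLR.
have : (i %/ Z).+1 * Z <= K * Z by rewrite leq_mul2r lt_iZ_K orbT.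
by rewrite /piZ mulSn mulnC; have := ltn_pmod (i + s) Z_gt0; lia.
Qed.

Lemma piO_val s i : val (piO s i) = piZ Z s i.
Proof. by rewrite /piO insubdK //; apply: piZ_lt. Qed.

Lemma piO_divZ s i : piO s i %/ Z = i %/ Z.
Proof.
by rewrite piO_val /piZ mulnC divnMDl // (divn_small (ltn_pmod _ Z_gt0)) addn0.
Qed.

Lemma piO_modZ s i : piO s i %% Z = (i + s) %% Z.
Proof. by rewrite piO_val /piZ mulnC modnMDl modn_mod. Qed.

Lemma piO0 i : piO 0 i = i.
Proof. by apply: val_inj; rewrite piO_val /piZ addn0 mulnC -divn_eq. Qed.

Lemma piOD a b i : piO a (piO b i) = piO (b + a) i.
Proof.
apply: val_inj; rewrite [LHS]piO_val [RHS]piO_val /piZ piO_divZ.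
by rewrite -modnDml piO_modZ modnDml addnA.
Qed.

Lemma piO_inj s : injective (@piO K Z s).
Proof.
move=> i i' e; apply: val_inj; rewrite /= (divn_eq i Z) (divn_eq i' Z).
congr (_ * _ + _); first by rewrite -(piO_divZ s) e piO_divZ.
by apply/eqP; rewrite -(eqn_modDr s) -!piO_modZ e.
Qed.

Lemma piO_onto s i : exists i', i = piO s i'.
Proof. by have [g _ gK] := injF_bij (@piO_inj s); exists (g i); rewrite gK. Qed.

Lemma piO_modL L s i : L %| Z -> piO s i %% L = (i + s) %% L.
Proof.
move=> dvd_LZ; rewrite piO_val /piZ -modnDml (eqP (dvdn_mulr _ dvd_LZ)) add0n.
exact: modn_dvdm.
Qed.

End CyclicShift.

Lemma modn_diffDr Z a b s : 0 < Z ->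
  ((a + s) %% Z + Z - (b + s) %% Z) %% Z = (a %% Z + Z - b %% Z) %% Z.
Proof.
move=> Z_gt0.
have diffK x y : (x %% Z + Z - y %% Z) + y = x %[mod Z].
  rewrite {2}(divn_eq y Z) addnCA subnK; last first.
    by rewrite (leq_trans (ltnW (ltn_pmod y Z_gt0))) ?leq_addl.
  by rewrite modnMDl modnDr modn_mod.
have diffKD x y : (x %% Z + Z - y %% Z) + (y + s) = x + s %[mod Z].
  by rewrite addnA -modnDml diffK modnDml.
by apply/eqP; rewrite -(eqn_modDr (b + s)) diffK diffKD.
Qed.

Section Circulant.
Context {M N Z : nat} {H : 'M[bool]_(M * Z, N * Z)}.
Hypotheses (Z_gt0 : 0 < Z) (circH : circulant_blocks H).

Lemma circulant_shift s i j : H (piO s i) (piO s j) = H i j.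
Proof. by apply: circH; rewrite ?piO_divZ // !piO_modZ // modn_diffDr. Qed.

Lemma Nv_shift s j : Nv H (piO s j) = [set piO s i | i in Nv H j].
Proof.
apply/setP => x; have [y ->] := piO_onto Z_gt0 s x.
by rewrite mem_imset ?inE ?circulant_shift //; apply: piO_inj.
Qed.

End Circulant.

Lemma geq_bigmax_downclosed n (P : pred nat) k :
  0 < k < n -> (forall l l', l' <= l < n -> P l -> P l') ->
  (k <= \max_(l < n | P l) l) = P k.
Proof.
case/andP=> k_gt0 lt_kn down; apply/idP/idP => [|Pk]; last first.
  exact: (@leq_bigmax_cond _ _ (fun l : 'I_n => val l) (Ordinal lt_kn)).
apply: contraLR => nPk; rewrite -ltnNge.
apply: (@leq_ltn_trans k.-1); last by rewrite ltn_predL.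
apply/bigmax_leqP => l Pl; rewrite -ltnS prednK // ltnNge.
by apply: contra nPk => le_kl; apply: (down l); rewrite ?le_kl ?ltn_ord.
Qed.

(* By [layer_residue], the rows of column [j] in the stack of [T_0], ..., [T_(k-1)]. *)
Definition stack_rows {M N Z : nat} (H : 'M[bool]_(M * Z, N * Z)) (L k : nat)
    (j : 'I_(N * Z)) : {set 'I_(M * Z)} :=
  [set i in Nv H j | i %% L < k].

Section ResidueLayers.
Context {M Z L : nat}.
Hypotheses (Z_gt0 : 0 < Z) (L_dvd_Z : L %| Z).
Let T0 := [set x : 'I_(M * Z) | x %% L == 0].

Lemma layer_residue l : l < L -> layer 1 T0 l = [set y : 'I_(M * Z) | y %% L == l].
Proof.
move=> lt_lL; apply/setP => y; rewrite inE /layer /pi_set muln1.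
apply/imsetP/eqP => [[x]|y_l].
  by rewrite inE => /eqP x0 ->; rewrite piO_modL // -modnDml x0 modn_small.
have [x def_y] := piO_onto Z_gt0 l y; exists x => //.
have : (x + l) %% L = (0 + l) %% L by rewrite -piO_modL // -def_y y_l modn_small.
by rewrite inE => /eqP; rewrite eqn_modDr mod0n.
Qed.

Lemma residue_layers_feasible : 0 < L -> feasible L 1 T0.
Proof.
move=> L_gt0; split=> //; split=> [l1 l2 lt_l1L lt_l2L ne_l12 | ].
  rewrite !layer_residue // disjoint_subset; apply/subsetP => y.
  by rewrite !inE => /eqP->.
apply/setP => y; rewrite inE; apply/bigcupP.
exists (Ordinal (ltn_pmod y L_gt0)) => //.
by rewrite layer_residue ?ltn_pmod ?inE.
Qed.

Lemma stack_col_weight_residue {N} (H : 'M[bool]_(M * Z, N * Z)) k j :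
  k <= L -> stack_col_weight 1 H T0 k j = #|stack_rows H L k j|.
Proof.
elim: k => [|k IHk] le_kL.
  rewrite /stack_col_weight big_ord0; apply/esym/eqP; rewrite cards_eq0 -subset0.
  by apply/subsetP => i; rewrite inE ltn0 andbF.
rewrite /stack_col_weight big_ord_recr /= -/(stack_col_weight _ _ _ _ _).
rewrite IHk 1?ltnW // layer_residue //.
rewrite -(cardsID [set i : 'I_(M * Z) | i %% L < k] (stack_rows H L k.+1 j)).
by congr (_ + _); apply: eq_card => i; rewrite !inE ltnS; case: (H i j); case: ltngtP.
Qed.

Lemma layer_distance_geq {N} (H : 'M[bool]_(M * Z, N * Z)) k : 0 < k < L ->
  (k <= layer_distance L 1 H T0) = [forall j, #|stack_rows H L k j| <= 1].
Proof.
move=> k_bounds; have lt_kL := proj2 (andP k_bounds).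
have stack_okE l : l <= L ->
    stack_ok 1 H T0 l = [forall j, #|stack_rows H L l j| <= 1].
  by move=> le_lL; apply: eq_forallb => j; rewrite stack_col_weight_residue.
rewrite /layer_distance geq_bigmax_downclosed // ?stack_okE 1?ltnW //.
move=> l l' /andP[le_l'l lt_lL]; rewrite !stack_okE 1?ltnW //; last first.
  exact: leq_ltn_trans lt_lL.
move=> /forallP low_l; apply/forallP => j; apply: leq_trans (low_l j).
by apply/subset_leq_card/subsetP => i; rewrite !inE => /andP[-> /leq_trans->].
Qed.

End ResidueLayers.

Section ColumnShifts.
Context {M N Z L k : nat} {H : 'M[bool]_(M * Z, N * Z)}.
Hypotheses (Z_gt0 : 0 < Z) (L_dvd_Z : L %| Z) (circH : circulant_blocks H).
Hypotheses (k_gt0 : 0 < k) (lt_kL : k < L).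

Lemma zero_residue_pred (a t : nat) : t < k ->
  ((a + t) %% L == 0) = ((a + k.-1) %% L == k.-1 - t).
Proof.
move=> lt_tk; set d := k.-1 - t.
have -> : k.-1 = t + d by rewrite subnKC // -ltnS prednK.
have lt_dL : d < L by rewrite /d; lia.
have := eqn_modDr d (a + t) 0 L; rewrite mod0n add0n (modn_small lt_dL) => <-.
by rewrite addnA.
Qed.

Lemma card_stack_rows_shift s j :
  #|stack_rows H L k (piO s j)| = #|[set i in Nv H j | (i + s) %% L < k]|.
Proof.
rewrite -(card_preimset _ (piO_inj Z_gt0 s)); apply: eq_card => i.
by rewrite !inE circulant_shift // piO_modL.
Qed.

Lemma disjoint_shifts_inj j :
    (forall t, 1 <= t < k -> Nv H j :&: Nv H (piO t j) = set0) ->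
  forall (t t' : nat) a a', t < k -> t' < k -> a \in Nv H j -> a' \in Nv H j ->
  piO t a = piO t' a' -> a = a'.
Proof.
move=> disj t t' a a'; wlog le_t't : t t' a a' / t' <= t => [hw ? ? ? ? e|].
  by case: (leqP t' t) => [? | /ltnW ?]; [apply: (hw t t') | apply/esym/(hw t' t)].
move=> lt_tk _ aj a'j e.
have shift_a : piO (t - t') a = a'.
  by apply: (piO_inj Z_gt0 t'); rewrite piOD // subnK.
have [d0 | d_gt0] := posnP (t - t'); first by rewrite -shift_a d0 piO0.
have : a' \in Nv H j :&: Nv H (piO (t - t') j).
  by rewrite inE a'j -shift_a Nv_shift // mem_imset //; apply: piO_inj.
by rewrite disj ?inE // d_gt0 /=; apply: leq_ltn_trans lt_tk; apply: leq_subr.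
Qed.

Lemma stack_rows_disjoint_shifts :
    (forall j, #|stack_rows H L k j| <= 1) ->
  forall j t, 1 <= t < k -> Nv H j :&: Nv H (piO t j) = set0.
Proof.
move=> stack_le1 j t /andP[t_gt0 lt_tk]; apply/eqP; rewrite -subset0; apply/subsetP => x.
rewrite inE Nv_shift // => /andP[xj /imsetP[i ij def_x]].
pose s := L - i %% L.
have i_s0 : (i + s) %% L = 0.
  by rewrite -modnDml subnKC ?modnn // ltnW ?ltn_pmod // (ltn_trans k_gt0).
have := stack_le1 (piO s j); rewrite card_stack_rows_shift => /card_le1_eqP row_uniq.
have x_i : x = i.
  apply: row_uniq; rewrite inE ?ij ?xj ?i_s0 //= def_x -modnDml piO_modL // modnDml addnAC.
  by rewrite -modnDml i_s0 add0n modn_small // (ltn_trans lt_tk lt_kL).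
move: def_x; rewrite x_i => /(congr1 (fun y : 'I_(M * Z) => y %% L)).
rewrite piO_modL // -{1}[i : nat]addn0 => /eqP.
by rewrite eqn_modDl mod0n modn_small ?(ltn_trans lt_tk) // => /eqP t0; rewrite -t0 in t_gt0.
Qed.

Lemma stack_rows_zero_residue :
    (forall j, #|stack_rows H L k j| <= 1) ->
  forall j, #|[set x in \bigcup_(t < k) Nv H (piO t j) | x %% L == 0]| <= 1.
Proof.
move=> stack_le1 j; have := stack_le1 (piO k.-1 j).
rewrite card_stack_rows_shift => /card_le1_eqP row_uniq.
apply/card_le1_eqP => x x'; rewrite !inE.
move=> /andP[/bigcupP[t _ xt] x0] /andP[/bigcupP[t' _ x't'] x'0].
move: xt x't' x0 x'0; rewrite !Nv_shift // => /imsetP[i ij ->] /imsetP[i' i'j ->].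
rewrite !piO_modL // !zero_residue_pred // => /eqP i_t /eqP i'_t'.
have lt_t := ltn_ord t; have lt_t' := ltn_ord t'.
have eq_ii' : i = i' by apply: row_uniq; rewrite inE ?ij ?i'j ?i_t ?i'_t' //=; lia.
have -> : t = t' :> nat by move: i_t; rewrite eq_ii' i'_t'; lia.
by rewrite eq_ii'.
Qed.

Lemma stack_rows_of_conditions :
    (forall j,
     (forall t, 1 <= t < k -> Nv H j :&: Nv H (piO t j) = set0) /\
     #|[set x in \bigcup_(t < k) Nv H (piO t j) | x %% L == 0]| <= 1) ->
  forall j, #|stack_rows H L k j| <= 1.
Proof.
move=> cond j; have [j' ->] := piO_onto Z_gt0 k.-1 j; have [disj zero1] := cond j'.
have lift a : a \in Nv H j' -> (a + k.-1) %% L < k ->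
    piO (k.-1 - (a + k.-1) %% L) a \in
      [set x in \bigcup_(t < k) Nv H (piO t j') | x %% L == 0].
  move=> aj lt_rk; have lt_tk : k.-1 - (a + k.-1) %% L < k by lia.
  rewrite inE piO_modL // zero_residue_pred // subKn ?eqxx ?andbT; last lia.
  apply/bigcupP; exists (Ordinal lt_tk) => //=.
  by rewrite Nv_shift // mem_imset //; apply: piO_inj.
apply/card_le1_eqP => x x'; rewrite /stack_rows Nv_shift //.
move=> /setIdP[/imsetP[a aj ->] ra] /setIdP[/imsetP[a' a'j ->] ra'].
move: ra ra'; rewrite !piO_modL // => ra ra'; congr piO.
have := card_le1_eqP zero1 _ _ (lift a aj ra) (lift a' a'j ra').
by apply: disjoint_shifts_inj a'j aj => //; lia.
Qed.

Lemma stack_rows_le1E :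
  (forall j, #|stack_rows H L k j| <= 1) <->
  (forall j,
     (forall t, 1 <= t < k -> Nv H j :&: Nv H (piO t j) = set0) /\
     #|[set x in \bigcup_(t < k) Nv H (piO t j) | x %% L == 0]| <= 1).
Proof.
split=> [stack_le1 j | ]; last exact: stack_rows_of_conditions.
by split; [apply: stack_rows_disjoint_shifts | apply: stack_rows_zero_residue].
Qed.

End ColumnShifts.

Theorem lemma4 (M N Z L k : nat) (H : 'M[bool]_(M * Z, N * Z)) :
  0 < M -> 0 < N -> 0 < Z ->
  circulant_blocks H -> no_zero_row H -> distinct_rows H ->
  1 < L -> L %| Z -> 1 <= k <= L - 1 ->
  let T0 := [set x : 'I_(M * Z) | x %% L == 0] in
  (feasible L 1 T0 /\ k <= layer_distance L 1 H T0) <->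
  (forall j : 'I_(N * Z),
     (forall t, 1 <= t < k -> Nv H j :&: Nv H (piO t j) = set0) /\
     #|[set x in \bigcup_(t < k) Nv H (piO t j) | x %% L == 0]| <= 1).
Proof.
move=> _ _ Z_gt0 circH _ _ lt_1L L_dvd_Z /andP[k_gt0 le_k_L1] T0.
have lt_kL : k < L by lia.
rewrite /T0 layer_distance_geq ?k_gt0 //.
rewrite -(stack_rows_le1E Z_gt0 L_dvd_Z circH k_gt0 lt_kL).
have feasT0 := residue_layers_feasible Z_gt0 L_dvd_Z (ltnW lt_1L).
by split=> [[_ /forallP] | /forallP].
Qed.
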